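(* Let $n\in\mathbb{N}=\{1,2,\dots\}$ and $0\le i\le n-1$. Then $$\int\frac{t^i}{i!}h_n(t)\,dt=-\frac{1}{n!}\sum_{k=0}^i\frac{(n-1-k)!}{2^{k+1}(i-k)!}\,t^{i-k}\,h_{n-1-k}(t),$$ i.e. the right-hand side is an antiderivative on $\mathbb{R}$ of $t\mapsto\frac{t^i}{i!}h_n(t)$.
   Context: $H_n$ denotes the $n$-th Hermite polynomial ($H_n(t)=(-1)^ne^{t^2}\frac{d^n}{dt^n}e^{-t^2}$), and the Hermite functions are $h_n(t)=\frac{1}{2^nn!\sqrt{\pi}}e^{-t^2}H_n(t)$, $t\in\mathbb{R}$. *)

From Stdlib Require Import Reals Arith Factorial.
From Coquelicot Require Import Coquelicot.
Open Scope R_scope.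

Definition hermiteH (n : nat) (t : R) : R :=
  (-1) ^ n * exp (t ^ 2) * Derive_n (fun s => exp (- s ^ 2)) n t.

Definition hermite_fun (n : nat) (t : R) : R :=
  / (2 ^ n * INR (fact n) * sqrt PI) * exp (- t ^ 2) * hermiteH n t.

Definition antideriv (n i : nat) (t : R) : R :=
  - / INR (fact n) *
  sum_f_R0 (fun k => INR (fact (n - 1 - k)) / (2 ^ (k + 1) * INR (fact (i - k)))
                     * t ^ (i - k) * hermite_fun (n - 1 - k) t) i.

(* The Rodrigues formula gives (d/dt)^m e^{-t^2} = (-1)^m e_m(t) with e_m := H_m e^{-t^2}
   ([hermite_gauss m]), so e_m' = -e_{m+1}.  For any such chain, the Taylor-like sum
   S(t) = sum_{j<=i} t^j/j! e_{m+j}(t) telescopes: S'(t) = -t^i/i! e_{m+i+1}(t).  With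
   m = n-1-i and j = i-k, the right-hand side of the formula is a constant multiple of S. *)
From Stdlib Require Import Reals Factorial Lra Lia.
From Coquelicot Require Import Coquelicot.
Open Scope R_scope.

Lemma is_derive_eq (f : R -> R) (x l l' : R) :
  is_derive f x l -> l = l' -> is_derive f x l'.
Proof. now intros H ->. Qed.

Section TaylorTelescope.

Variable f : nat -> R -> R.
Hypothesis f_derive : forall m t, is_derive (f m) t (- f (S m) t).

Lemma taylor_term_derive (j m : nat) (t : R) :
  is_derive (fun s => s ^ S j / INR (fact (S j)) * f m s) t
    (t ^ j / INR (fact j) * f m t - t ^ S j / INR (fact (S j)) * f (S m) t).
Proof.
  assert (Hcoef : is_derive (fun s => s ^ S j / INR (fact (S j))) t (t ^ j / INR (fact j))).
  { auto_derive; [exact I|].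
    change (match j with 0%nat => 1 | S _ => INR j + 1 end) with (INR (S j)).
    change (fact j + j * fact j)%nat with (fact (S j)).
    rewrite fact_simpl, mult_INR.
    assert (INR (fact j) <> 0) by apply INR_fact_neq_0.
    assert (INR (S j) <> 0) by (apply not_0_INR; lia).
    field; auto. }
  eapply is_derive_eq.
  { apply (is_derive_mult _ (f m)); [exact Hcoef | apply f_derive | intros; apply Rmult_comm]. }
  unfold plus, mult; simpl; ring.
Qed.

Lemma taylor_sum_derive (m i : nat) (t : R) :
  is_derive (fun s => sum_f_R0 (fun j => s ^ j / INR (fact j) * f (m + j)%nat s) i) t
    (- (t ^ i / INR (fact i) * f (S (m + i)) t)).
Proof.
  induction i as [|i IH]; cbn [sum_f_R0].
  - eapply is_derive_eq; [apply (is_derive_scal (f (m + 0)%nat) t (1 / 1)), f_derive|].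
    simpl; field.
  - eapply is_derive_eq.
    { apply (is_derive_plus _ (fun s => s ^ S i / INR (fact (S i)) * f (m + S i)%nat s));
        [exact IH | apply taylor_term_derive]. }
    (* the first half of the new term's derivative cancels the previous boundary term *)
    replace (m + S i)%nat with (S (m + i)) by lia.
    unfold plus; simpl; ring.
Qed.

End TaylorTelescope.

Fixpoint hermite_poly (m : nat) (t : R) : R :=
  match m with
  | 0 => 1
  | 1 => 2 * t
  | S (S k as m') => 2 * t * hermite_poly m' t - 2 * INR m' * hermite_poly k t
  end.

Definition hermite_poly_deriv (m : nat) (t : R) : R :=
  match m with
  | 0 => 0
  | S k => 2 * INR (S k) * hermite_poly k t
  end.

Lemma hermite_poly_S (m : nat) (t : R) :
  hermite_poly (S m) t = 2 * t * hermite_poly m t - hermite_poly_deriv m t.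
Proof. destruct m; simpl; [ring | reflexivity]. Qed.

Lemma hermite_poly_derive (m : nat) (t : R) :
  is_derive (hermite_poly m) t (hermite_poly_deriv m t).
Proof.
  revert t.
  enough (H : forall m, (forall t, is_derive (hermite_poly m) t (hermite_poly_deriv m t)) /\
                        (forall t, is_derive (hermite_poly (S m)) t (hermite_poly_deriv (S m) t)))
    by apply H.
  clear m; induction m as [|m [IHm IHSm]]; split; intro t.
  - eapply is_derive_eq; [apply is_derive_const | reflexivity].
  - eapply is_derive_eq; [apply is_derive_scal, is_derive_id|]. unfold one; simpl; ring.
  - apply IHSm.
  - eapply is_derive_eq.
    { apply (is_derive_minus (fun s => 2 * s * hermite_poly (S m) s)
                             (fun s => 2 * INR (S m) * hermite_poly m s)).
      - apply (is_derive_mult (fun s => 2 * s)).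
        + apply is_derive_scal, is_derive_id.
        + apply IHSm.
        + intros; apply Rmult_comm.
      - apply is_derive_scal, IHm. }
    cbn [hermite_poly_deriv]. rewrite (hermite_poly_S m t), !S_INR.
    unfold minus, plus, opp, mult, one; simpl; ring.
Qed.

Definition hermite_gauss (m : nat) (t : R) : R := hermite_poly m t * exp (- t ^ 2).

Lemma gauss_derive (t : R) :
  is_derive (fun s => exp (- s ^ 2)) t (- (2 * t) * exp (- t ^ 2)).
Proof.
  auto_derive; [exact I|].
  replace (t * (t * 1)) with (t ^ 2) by ring; ring.
Qed.

Lemma hermite_gauss_derive (m : nat) (t : R) :
  is_derive (hermite_gauss m) t (- hermite_gauss (S m) t).
Proof.
  eapply is_derive_eq.
  { apply (is_derive_mult (hermite_poly m) (fun s => exp (- s ^ 2))).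
    - apply hermite_poly_derive.
    - apply gauss_derive.
    - intros; apply Rmult_comm. }
  unfold hermite_gauss, plus, mult; rewrite hermite_poly_S; simpl; ring.
Qed.

Lemma Derive_n_gauss (m : nat) (t : R) :
  Derive_n (fun s => exp (- s ^ 2)) m t = (-1) ^ m * hermite_gauss m t.
Proof.
  revert t; induction m as [|m IH]; intro t.
  - unfold hermite_gauss; simpl; ring.
  - cbn [Derive_n]; rewrite (Derive_ext _ _ t IH).
    apply is_derive_unique.
    eapply is_derive_eq; [apply is_derive_scal, hermite_gauss_derive|]. simpl; ring.
Qed.

Lemma hermiteH_eq (m : nat) (t : R) : hermiteH m t = hermite_poly m t.
Proof.
  unfold hermiteH; rewrite Derive_n_gauss; unfold hermite_gauss.
  replace ((-1) ^ m * exp (t ^ 2) * ((-1) ^ m * (hermite_poly m t * exp (- t ^ 2))))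
    with (((-1) * (-1)) ^ m * exp (t ^ 2 + - t ^ 2) * hermite_poly m t)
    by (rewrite Rpow_mult_distr, exp_plus; ring).
  replace (-1 * -1) with 1 by ring.
  replace (t ^ 2 + - t ^ 2) with 0 by ring.
  rewrite pow1, exp_0; ring.
Qed.

Lemma hermite_fun_eq (m : nat) (t : R) :
  hermite_fun m t = / (2 ^ m * INR (fact m) * sqrt PI) * hermite_gauss m t.
Proof. unfold hermite_fun, hermite_gauss; rewrite hermiteH_eq; ring. Qed.

Lemma sqrt_PI_neq_0 : sqrt PI <> 0.
Proof. apply Rgt_not_eq, sqrt_lt_R0, PI_RGT_0. Qed.

Lemma antideriv_eq (n i : nat) (t : R) : (1 <= n)%nat -> (i <= n - 1)%nat ->
  antideriv n i t = - / (2 ^ n * INR (fact n) * sqrt PI) *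
    sum_f_R0 (fun j => t ^ j / INR (fact j) * hermite_gauss (n - 1 - i + j) t) i.
Proof.
  intros hn hi; unfold antideriv.
  rewrite <- (sum_f_R0_skip (fun j => t ^ j / INR (fact j) * hermite_gauss (n - 1 - i + j) t)).
  rewrite !(scal_sum _ i).
  assert (sqrt PI <> 0) by apply sqrt_PI_neq_0.
  assert (2 ^ n <> 0) by (apply pow_nonzero; lra).
  assert (INR (fact n) <> 0) by apply INR_fact_neq_0.
  apply sum_eq; intros k hk.
  rewrite hermite_fun_eq.
  replace (n - 1 - i + (i - k))%nat with (n - 1 - k)%nat by lia.
  assert (Hpow : 2 ^ n = 2 ^ (k + 1) * 2 ^ (n - 1 - k)).
  { rewrite <- pow_add; f_equal; lia. }
  rewrite Hpow.
  assert (2 ^ (k + 1) <> 0) by (apply pow_nonzero; lra).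
  assert (2 ^ (n - 1 - k) <> 0) by (apply pow_nonzero; lra).
  assert (INR (fact (n - 1 - k)) <> 0) by apply INR_fact_neq_0.
  assert (INR (fact (i - k)) <> 0) by apply INR_fact_neq_0.
  field; repeat split; auto.
Qed.

Theorem lemma3p2 (n i : nat) (hn : (1 <= n)%nat) (hi : (i <= n - 1)%nat) :
  forall t : R,
    is_derive (antideriv n i) t (t ^ i / INR (fact i) * hermite_fun n t).
Proof.
  intro t.
  apply (is_derive_ext (fun s => - / (2 ^ n * INR (fact n) * sqrt PI) *
    sum_f_R0 (fun j => s ^ j / INR (fact j) * hermite_gauss (n - 1 - i + j) s) i)).
  { intro s; symmetry; now apply antideriv_eq. }
  eapply is_derive_eq.
  { apply is_derive_scal, taylor_sum_derive, hermite_gauss_derive. }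
  replace (S (n - 1 - i + i)) with n by lia.
  rewrite hermite_fun_eq; ring.
Qed.
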